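(* Let $X$ be a separable Banach space. There exists a sequence $(a_k)_{k\ge 0}$ of elements of $X$ such that: (1) for every infinite set $A\subset\mathbb{N}$, the closed linear span of $\{a_k : k\in A\}$ equals $X$; (2) for every bounded linear operator $T:X\to X$, setting $\eta=\{k\ge 0: Ta_k\neq 0\}$, the family $\big(Ta_k/\|Ta_k\|\big)_{k\in\eta}$ is relatively compact in $X$.
   Context: ''span'' denotes the closed linear span. *)

From Stdlib Require Import Reals List.
Open Scope R_scope.

Record NormedSpace := {
  carrier :> Type;
  zero : carrier;
  add : carrier -> carrier -> carrier;
  opp : carrier -> carrier;
  scal : R -> carrier -> carrier;
  norm : carrier -> R;
  add_assoc : forall x y z, add x (add y z) = add (add x y) z;
  add_comm : forall x y, add x y = add y x;
  add_zero_r : forall x, add x zero = x;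
  add_opp_r : forall x, add x (opp x) = zero;
  scal_assoc : forall a b x, scal a (scal b x) = scal (a * b) x;
  scal_one : forall x, scal 1 x = x;
  scal_distr_l : forall a x y, scal a (add x y) = add (scal a x) (scal a y);
  scal_distr_r : forall a b x, scal (a + b) x = add (scal a x) (scal b x);
  norm_zero_iff : forall x, norm x = 0 <-> x = zero;
  norm_scal : forall a x, norm (scal a x) = Rabs a * norm x;
  norm_triangle : forall x y, norm (add x y) <= norm x + norm y
}.

Arguments zero {_}.
Arguments add {_} _ _.
Arguments opp {_} _.
Arguments scal {_} _ _.
Arguments norm {_} _.

Definition dist {X : NormedSpace} (x y : X) : R := norm (add x (opp y)).

Definition complete (X : NormedSpace) : Prop :=
  forall u : nat -> X,
    (forall eps, 0 < eps -> exists N, forall m n, (N <= m)%nat -> (N <= n)%nat ->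
        dist (u m) (u n) < eps) ->
    exists l : X, forall eps, 0 < eps -> exists N, forall n, (N <= n)%nat ->
        dist (u n) l < eps.

Record BanachSpace := {
  bs_space :> NormedSpace;
  bs_complete : complete bs_space
}.

Definition separable (X : NormedSpace) : Prop :=
  exists d : nat -> X, forall (x : X) eps, 0 < eps -> exists n, dist x (d n) < eps.

Definition closure {X : NormedSpace} (S : X -> Prop) : X -> Prop :=
  fun x => forall eps, 0 < eps -> exists y, S y /\ dist x y < eps.

Inductive span {X : NormedSpace} (S : X -> Prop) : X -> Prop :=
  | span_zero : span S zero
  | span_gen : forall x, S x -> span S x
  | span_add : forall x y, span S x -> span S y -> span S (add x y)
  | span_scal : forall a x, span S x -> span S (scal a x).

Definition closed_span {X : NormedSpace} (S : X -> Prop) : X -> Prop :=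
  closure (span S).

Definition infinite_nat_set (A : nat -> Prop) : Prop :=
  forall N, exists k, (N <= k)%nat /\ A k.

Definition bounded_linear {X : NormedSpace} (T : X -> X) : Prop :=
  (forall x y, T (add x y) = add (T x) (T y)) /\
  (forall a x, T (scal a x) = scal a (T x)) /\
  (exists C, forall x, norm (T x) <= C * norm x).

Definition is_open {X : NormedSpace} (U : X -> Prop) : Prop :=
  forall x, U x -> exists eps, 0 < eps /\ forall y, dist y x < eps -> U y.

Definition compact {X : NormedSpace} (K : X -> Prop) : Prop :=
  forall (I : Type) (U : I -> X -> Prop),
    (forall i, is_open (U i)) ->
    (forall x, K x -> exists i, U i x) ->
    exists l : list I, forall x, K x -> exists i, In i l /\ U i x.

Definition relatively_compact {X : NormedSpace} (S : X -> Prop) : Prop :=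
  compact (closure S).

(* Let (d_n) be dense in X and e_n := d_n / (1 + |d_n|), so |e_n| <= 1.
   For the weights t_k := (1/2)^(k+1) consider the tail sums
       F_k(m) := sum_{j >= 0} t_k^j e_(m+j),
   which converge by completeness and satisfy F_k(m) = e_m + t_k F_k(m+1),
   and put a_k := F_k(0).

   (1) If A is infinite, then e_m is a limit of the F_k(m), k in A (since
       |F_k(m) - e_m| <= 2 t_k), and F_k(m+1) = (F_k(m) - e_m) / t_k; by
       induction on m every e_m, hence every d_n and all of X, lies in the
       closed span of (a_k)_(k in A).
   (2) If T is bounded and linear and m is the first index with T e_m <> 0,
       then T a_k = t_k^m T F_k(m) and T F_k(m) -> T e_m, so the normalised
       vectors T a_k / |T a_k| converge to T e_m / |T e_m|; if there is no such
       m, every T a_k vanishes.  Either way the family is a (possibly empty)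
       convergent sequence, whose closure is compact. *)

From Stdlib Require Import Reals Lra Lia List Classical ClassicalEpsilon.
Open Scope R_scope.

Section NormedSpaceFacts.
Context {X : NormedSpace}.
Implicit Types x y z : X.

Lemma add_zero_l x : add zero x = x.
Proof. rewrite add_comm; apply add_zero_r. Qed.

Lemma add_swap x y z : add x (add y z) = add y (add x z).
Proof. rewrite !add_assoc, (add_comm _ x y); reflexivity. Qed.

Lemma scal_zero_l x : scal 0 x = zero.
Proof. apply norm_zero_iff. rewrite norm_scal, Rabs_R0; ring. Qed.

Lemma scal_zero_r (a : R) : scal a (@zero X) = zero.
Proof.
  apply norm_zero_iff. rewrite norm_scal.
  replace (norm (@zero X)) with 0 by (symmetry; apply norm_zero_iff; reflexivity). ring.
Qed.

Lemma opp_scal x : opp x = scal (-1) x.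
Proof.
  assert (Hsum : add x (scal (-1) x) = zero).
  { rewrite <- (scal_one _ x) at 1. rewrite <- scal_distr_r.
    replace (1 + -1) with 0 by ring. apply scal_zero_l. }
  rewrite <- (add_zero_r _ (opp x)), <- Hsum, add_assoc, (add_comm _ (opp x) x),
    add_opp_r, add_zero_l; reflexivity.
Qed.

Lemma norm_opp x : norm (opp x) = norm x.
Proof.
  rewrite opp_scal, norm_scal.
  replace (Rabs (-1)) with 1 by (rewrite Rabs_left; lra). ring.
Qed.

Lemma opp_add x y : opp (add x y) = add (opp x) (opp y).
Proof. rewrite !opp_scal, scal_distr_l; reflexivity. Qed.

Lemma scal_opp (a : R) x : scal a (opp x) = opp (scal a x).
Proof. rewrite !opp_scal, !scal_assoc. f_equal; ring. Qed.

Lemma opp_opp x : opp (opp x) = x.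
Proof.
  rewrite !opp_scal, scal_assoc. replace (-1 * -1) with 1 by ring. apply scal_one.
Qed.

Lemma norm_nonneg x : 0 <= norm x.
Proof.
  pose proof (norm_triangle _ x (opp x)) as Htri.
  rewrite add_opp_r, norm_opp in Htri.
  replace (norm (@zero X)) with 0 in Htri by (symmetry; apply norm_zero_iff; reflexivity).
  lra.
Qed.

Lemma norm_pos x : x <> zero -> 0 < norm x.
Proof.
  intro Hx. destruct (norm_nonneg x) as [Hpos | Hzero]; auto.
  exfalso; apply Hx, norm_zero_iff; auto.
Qed.

Lemma dist_sym x y : dist x y = dist y x.
Proof.
  unfold dist. rewrite <- norm_opp, opp_add, opp_opp, add_comm; reflexivity.
Qed.

Lemma dist_tri x y z : dist x z <= dist x y + dist y z.
Proof.
  unfold dist. replace (add x (opp z)) with (add (add x (opp y)) (add y (opp z))).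
  - apply norm_triangle.
  - rewrite <- add_assoc, (add_assoc _ (opp y) y), (add_comm _ (opp y) y), add_opp_r,
      add_zero_l; reflexivity.
Qed.

Lemma dist_refl x : dist x x = 0.
Proof. unfold dist. rewrite add_opp_r. apply norm_zero_iff; reflexivity. Qed.

Lemma dist_eq x y : dist x y = 0 -> x = y.
Proof.
  unfold dist; intro H. apply norm_zero_iff in H.
  rewrite <- (add_zero_r _ x), <- (add_opp_r _ y), add_swap, H, add_zero_r.
  reflexivity.
Qed.

Lemma dist_nonneg x y : 0 <= dist x y.
Proof. apply norm_nonneg. Qed.

Lemma dist_zero_r x : dist x zero = norm x.
Proof.
  unfold dist. rewrite opp_scal, scal_zero_r, add_zero_r; reflexivity.
Qed.

Lemma dist_scal (a : R) x y : dist (scal a x) (scal a y) = Rabs a * dist x y.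
Proof. unfold dist. rewrite <- scal_opp, <- scal_distr_l, norm_scal; reflexivity. Qed.

Lemma dist_add_l x y z : dist (add x y) (add x z) = dist y z.
Proof.
  unfold dist. rewrite opp_add, <- add_assoc, (add_swap y), add_assoc, add_opp_r, add_zero_l.
  reflexivity.
Qed.

Lemma dist_add x y x' y' : dist (add x y) (add x' y') <= dist x x' + dist y y'.
Proof.
  unfold dist. rewrite opp_add, <- !add_assoc, (add_swap y), add_assoc. apply norm_triangle.
Qed.

Lemma dist_add_self x z : dist (add x z) x = norm z.
Proof. rewrite <- (add_zero_r _ x) at 2. rewrite dist_add_l, dist_zero_r; reflexivity. Qed.

Lemma norm_le_dist x y : norm x <= norm y + dist x y.
Proof.
  pose proof (dist_tri x y zero) as Htri. rewrite !dist_zero_r in Htri. lra.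
Qed.

End NormedSpaceFacts.

Lemma le_eps (a b : R) : (forall eps, 0 < eps -> a <= b + eps) -> a <= b.
Proof.
  intro H. destruct (Rle_or_lt a b) as [Hle | Hlt]; auto.
  specialize (H ((a - b) / 2) ltac:(lra)). lra.
Qed.

Lemma half_pow_small eps : 0 < eps -> exists N, (1/2)^N < eps.
Proof.
  intro Heps.
  destruct (pow_lt_1_zero (1/2) ltac:(rewrite Rabs_right; lra) eps Heps) as [N HN].
  exists N. specialize (HN N (le_n _)). rewrite Rabs_right in HN; auto.
  apply Rle_ge, pow_le; lra.
Qed.

Lemma least_element (Q : nat -> Prop) n :
  Q n -> exists m, Q m /\ forall j, (j < m)%nat -> ~ Q j.
Proof.
  induction n as [n IH] using (well_founded_induction Wf_nat.lt_wf). intro Hn.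
  destruct (classic (exists j, (j < n)%nat /\ Q j)) as [[j [Hj Qj]] | Hnone].
  - exact (IH j Hj Qj).
  - exists n; split; auto. intros j Hj Qj. apply Hnone; eauto.
Qed.

Section ClosedSpan.
Context {X : NormedSpace} (S : X -> Prop).

Lemma closed_span_of_span x : span S x -> closed_span S x.
Proof. intros H eps Heps. exists x. split; auto. rewrite dist_refl; auto. Qed.

Lemma closed_span_closed x :
  (forall eps, 0 < eps -> exists y, closed_span S y /\ dist x y < eps) -> closed_span S x.
Proof.
  intros H eps Heps. destruct (H (eps/2) ltac:(lra)) as [y [Hy Dxy]].
  destruct (Hy (eps/2) ltac:(lra)) as [z [Hz Dyz]].
  exists z; split; auto. pose proof (dist_tri x y z). lra.
Qed.

Lemma closed_span_add x y :
  closed_span S x -> closed_span S y -> closed_span S (add x y).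
Proof.
  intros Hx Hy eps Heps. destruct (Hx (eps/2) ltac:(lra)) as [x' [Hx' Dx]].
  destruct (Hy (eps/2) ltac:(lra)) as [y' [Hy' Dy]].
  exists (add x' y'); split.
  - apply span_add; auto.
  - pose proof (dist_add x y x' y'). lra.
Qed.

Lemma closed_span_scal (a : R) x : closed_span S x -> closed_span S (scal a x).
Proof.
  intros Hx eps Heps. pose proof (Rabs_pos a).
  destruct (Hx (eps / (Rabs a + 1))) as [x' [Hx' Dx]].
  { apply Rdiv_lt_0_compat; lra. }
  exists (scal a x'); split.
  - apply span_scal; auto.
  - rewrite dist_scal.
    apply Rmult_lt_compat_l with (r := Rabs a + 1) in Dx; [|lra].
    replace ((Rabs a + 1) * (eps / (Rabs a + 1))) with eps in Dx by (field; lra).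
    pose proof (dist_nonneg x x'). nra.
Qed.

End ClosedSpan.

Section ConvergentFamily.
Context {X : NormedSpace} (P : nat -> Prop) (u : nat -> X).

Lemma adherent_to_finite (x : X) N :
  (forall r, 0 < r -> exists k, (k < N)%nat /\ P k /\ dist x (u k) < r) ->
  exists k, (k < N)%nat /\ P k /\ x = u k.
Proof.
  induction N as [|N IH]; intro H.
  { destruct (H 1 ltac:(lra)) as [k [Hk _]]. inversion Hk. }
  destruct (classic (P N /\ x = u N)) as [[HP Hx] | Hnot].
  { exists N; repeat split; auto. }
  assert (Hr0 : exists r0, 0 < r0 /\ (P N -> r0 <= dist x (u N))).
  { destruct (classic (P N)) as [HP | HP].
    - exists (dist x (u N)); split; [|lra].
      destruct (dist_nonneg x (u N)) as [Hpos | Hzero]; auto.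
      exfalso. apply Hnot. split; auto. apply dist_eq; auto.
    - exists 1; split; [lra | tauto]. }
  destruct Hr0 as [r0 [Hr0 Hsep]].
  destruct IH as [k [Hk Hrest]].
  - intros r Hr. destruct (H (Rmin r r0) (Rmin_pos _ _ Hr Hr0)) as [k [Hk [HPk Dk]]].
    pose proof (Rmin_l r r0). pose proof (Rmin_r r r0).
    destruct (Nat.eq_dec k N) as [-> | Hne].
    + specialize (Hsep HPk). lra.
    + exists k; repeat split; auto; [lia | lra].
  - exists k; split; auto.
Qed.

Lemma cover_initial_segment (I : Type) (U : I -> X -> Prop) N :
  (forall k, P k -> exists i, U i (u k)) ->
  exists l, forall k, (k < N)%nat -> P k -> exists i, In i l /\ U i (u k).
Proof.
  intro Hcover. induction N as [|N [l Hl]].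
  { exists nil. intros k Hk. inversion Hk. }
  destruct (classic (P N)) as [HP | HP].
  - destruct (Hcover N HP) as [i Hi].
    exists (i :: l). intros k Hk HPk. destruct (Nat.eq_dec k N) as [-> | Hne].
    + exists i; split; simpl; auto.
    + destruct (Hl k ltac:(lia) HPk) as [j [Hj Hj']]. exists j; split; simpl; auto.
  - exists l. intros k Hk HPk. destruct (Nat.eq_dec k N) as [-> | Hne]; [contradiction|].
    apply Hl; auto. lia.
Qed.

(* Near any point L, an open cover of closure S needs at most one member:
   either some member contains a ball around L, or L is not adherent to S
   and closure S misses a ball around L. *)
Lemma cover_near_point (S : X -> Prop) (L : X) (I : Type) (U : I -> X -> Prop) :
  (forall i, is_open (U i)) -> (forall x, closure S x -> exists i, U i x) ->
  exists eps0 l, 0 < eps0 /\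
    forall x, closure S x -> dist x L < eps0 -> exists i, In i l /\ U i x.
Proof.
  intros Hopen Hcover.
  destruct (classic (exists i, U i L)) as [[i Hi] | Hnone].
  - destruct (Hopen i L Hi) as [eps0 [Heps0 Hball]].
    exists eps0, (i :: nil); split; auto. intros x _ Hx. exists i; split; simpl; auto.
  - assert (HL : ~ closure S L).
    { intro HL. destruct (Hcover L HL) as [i Hi]. apply Hnone; eauto. }
    apply not_all_ex_not in HL as [eps0 HL]. apply imply_to_and in HL as [Heps0 HL].
    exists eps0, nil; split; auto. intros x Hx HxL. exfalso. apply HL.
    destruct (Hx (eps0 - dist x L)) as [y [Hy Dxy]]; [lra|].
    exists y; split; auto. pose proof (dist_tri L x y). rewrite (dist_sym L x) in *. lra.
Qed.

Lemma relatively_compact_convergent (L : X) :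
  (forall eps, 0 < eps -> exists N, forall k, (N <= k)%nat -> P k -> dist (u k) L < eps) ->
  relatively_compact (fun y => exists k, P k /\ y = u k).
Proof.
  intros Hconv I U Hopen Hcover.
  set (S := fun y => exists k, P k /\ y = u k).
  destruct (cover_near_point S L I U Hopen Hcover) as [eps0 [l1 [Heps0 Hnear]]].
  destruct (Hconv (eps0/2) ltac:(lra)) as [N HN].
  destruct (cover_initial_segment I U N) as [l0 Hfar].
  { intros k HPk. apply Hcover. intros eps Heps. exists (u k). split.
    - exists k; auto.
    - rewrite dist_refl; auto. }
  exists (l1 ++ l0). intros x Hx.
  destruct (Rlt_or_le (dist x L) eps0) as [Hclose | Hfar_x].
  - destruct (Hnear x Hx Hclose) as [i [Hi Hi']]. exists i; split; auto. apply in_or_app; auto.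
  - (* far from L, x can only be adherent to the u k with k < N *)
    destruct (adherent_to_finite x N) as [k [Hk [HPk ->]]].
    + intros r Hr. destruct (Hx (Rmin r (eps0/2))) as [y [[k [HPk ->]] Dxy]].
      { apply Rmin_pos; lra. }
      pose proof (Rmin_l r (eps0/2)). pose proof (Rmin_r r (eps0/2)).
      exists k. destruct (Nat.lt_ge_cases k N) as [Hk | Hk].
      * repeat split; auto. lra.
      * exfalso. pose proof (HN k Hk HPk). pose proof (dist_tri x (u k) L). lra.
    + destruct (Hfar k Hk HPk) as [i [Hi Hi']]. exists i; split; auto. apply in_or_app; auto.
Qed.

End ConvergentFamily.

Definition is_lim {X : NormedSpace} (u : nat -> X) (l : X) : Prop :=
  forall eps, 0 < eps -> exists N, forall n, (N <= n)%nat -> dist (u n) l < eps.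

Lemma lim_unique {X : NormedSpace} (u : nat -> X) l1 l2 :
  is_lim u l1 -> is_lim u l2 -> l1 = l2.
Proof.
  intros H1 H2. apply dist_eq, Rle_antisym; [|apply dist_nonneg].
  apply le_eps. intros eps Heps.
  destruct (H1 (eps/2) ltac:(lra)) as [N1 Hu1]. destruct (H2 (eps/2) ltac:(lra)) as [N2 Hu2].
  specialize (Hu1 (N1 + N2)%nat ltac:(lia)). specialize (Hu2 (N1 + N2)%nat ltac:(lia)).
  pose proof (dist_tri l1 (u (N1 + N2)%nat) l2). rewrite dist_sym in Hu1. lra.
Qed.

Section TailSums.
Context {X : BanachSpace} (e : nat -> X) (t : R).
Hypothesis e_le1 : forall n, norm (e n) <= 1.
Hypothesis t_range : 0 <= t <= 1/2.

(* partial_tail N m = sum_{j < N} t^j e_(m+j), in Horner form. *)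
Fixpoint partial_tail (N m : nat) : X :=
  match N with
  | O => zero
  | S N' => add (e m) (scal t (partial_tail N' (S m)))
  end.

Lemma partial_tail_bound N m : norm (partial_tail N m) <= 2.
Proof.
  revert m; induction N as [|N IH]; intro m; simpl.
  - rewrite <- (dist_zero_r zero), dist_refl; lra.
  - eapply Rle_trans; [apply norm_triangle|]. rewrite norm_scal, Rabs_right by lra.
    specialize (e_le1 m); specialize (IH (S m)). nra.
Qed.

Lemma partial_tail_cauchy N p m :
  dist (partial_tail (N + p) m) (partial_tail N m) <= 2 * (1/2)^N.
Proof.
  revert m; induction N as [|N IH]; intro m; simpl.
  - rewrite dist_zero_r, Rmult_1_r. apply partial_tail_bound.
  - rewrite dist_add_l, dist_scal, Rabs_right by lra. specialize (IH (S m)).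
    pose proof (dist_nonneg (partial_tail (N + p) (S m)) (partial_tail N (S m))).
    pose proof (pow_le (1/2) N ltac:(lra)). nra.
Qed.

Definition tail_sum (m : nat) : X :=
  epsilon (inhabits (@zero X)) (fun l => is_lim (fun N => partial_tail N m) l).

Lemma tail_sum_spec m : is_lim (fun N => partial_tail N m) (tail_sum m).
Proof.
  unfold tail_sum. apply epsilon_spec, bs_complete.
  intros eps Heps. destruct (half_pow_small (eps/4) ltac:(lra)) as [N HN].
  exists N. intros p q Hp Hq.
  pose proof (partial_tail_cauchy N (p - N) m) as Dp.
  pose proof (partial_tail_cauchy N (q - N) m) as Dq.
  replace (N + (p - N))%nat with p in Dp by lia. replace (N + (q - N))%nat with q in Dq by lia.
  pose proof (dist_tri (partial_tail p m) (partial_tail N m) (partial_tail q m)).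
  rewrite (dist_sym (partial_tail q m)) in Dq. lra.
Qed.

Lemma tail_sum_rec m : tail_sum m = add (e m) (scal t (tail_sum (S m))).
Proof.
  apply (lim_unique (fun N => partial_tail (S N) m)).
  - intros eps Heps. destruct (tail_sum_spec m eps Heps) as [N HN].
    exists N. intros n Hn. apply HN; lia.
  - intros eps Heps. destruct (tail_sum_spec (S m) eps Heps) as [N HN].
    exists N. intros n Hn. simpl. rewrite dist_add_l, dist_scal, Rabs_right by lra.
    specialize (HN n Hn). pose proof (dist_nonneg (partial_tail n (S m)) (tail_sum (S m))).
    nra.
Qed.

Lemma tail_sum_bound m : norm (tail_sum m) <= 2.
Proof.
  apply le_eps. intros eps Heps.
  destruct (tail_sum_spec m eps Heps) as [N HN]. specialize (HN N (le_n _)).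
  pose proof (norm_le_dist (tail_sum m) (partial_tail N m)).
  rewrite dist_sym in HN. pose proof (partial_tail_bound N m). lra.
Qed.

End TailSums.

Definition weight (k : nat) : R := (1/2)^(S k).

Lemma half_pow_le_one j : (1/2)^j <= 1.
Proof. rewrite <- (pow1 j) at 2. apply pow_incr; lra. Qed.

Lemma weight_range k : 0 < weight k <= 1/2.
Proof.
  unfold weight. simpl. pose proof (pow_lt (1/2) k ltac:(lra)).
  pose proof (half_pow_le_one k). lra.
Qed.

Lemma weight_small d : 0 < d -> exists N, forall k, (N <= k)%nat -> weight k < d.
Proof.
  intro Hd. destruct (half_pow_small d Hd) as [N HN]. exists N. intros k Hk.
  unfold weight. replace (S k) with (N + (S k - N))%nat by lia. rewrite pow_add.
  pose proof (pow_lt (1/2) N ltac:(lra)). pose proof (half_pow_le_one (S k - N)). nra.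
Qed.

Section LinearOperators.
Context {X : NormedSpace} (T : X -> X).

Lemma bounded_linear_nonneg_bound :
  bounded_linear T -> exists C, 0 <= C /\ forall x, norm (T x) <= C * norm x.
Proof.
  intros [_ [_ [C HC]]]. exists (Rabs C). split; [apply Rabs_pos|].
  intro x. eapply Rle_trans; [apply HC|].
  apply Rmult_le_compat_r; [apply norm_nonneg | apply RRle_abs].
Qed.

Hypothesis T_add : forall x y, T (add x y) = add (T x) (T y).
Hypothesis T_scal : forall a x, T (scal a x) = scal a (T x).

Lemma linear_lipschitz (C : R) :
  (forall x, norm (T x) <= C * norm x) -> forall x y, dist (T x) (T y) <= C * dist x y.
Proof.
  intros HC x y. unfold dist. rewrite opp_scal, <- T_scal, <- T_add, <- opp_scal. apply HC.
Qed.

End LinearOperators.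

Definition normalize {X : NormedSpace} (x : X) : X := scal (/ norm x) x.

Lemma normalize_scal {X : NormedSpace} (c : R) (x : X) :
  0 < c -> 0 < norm x -> normalize (scal c x) = normalize x.
Proof.
  intros Hc Hx. unfold normalize. rewrite norm_scal, scal_assoc, Rabs_right by lra.
  f_equal. field. lra.
Qed.

Lemma normalize_dist {X : NormedSpace} (v w : X) : 0 < norm v -> 0 < norm w ->
  dist (normalize v) (normalize w) <= 2 * dist v w / norm w.
Proof.
  intros Hv Hw. unfold normalize.
  (* v/|v| - w/|w| = (v - w)/|w| + (1/|v| - 1/|w|) v *)
  replace (dist (scal (/ norm v) v) (scal (/ norm w) w))
    with (norm (add (scal (/ norm w) (add v (opp w))) (scal (/ norm v - / norm w) v))).
  2:{ unfold dist. f_equal.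
      rewrite scal_distr_l, scal_opp, <- add_assoc, add_swap, <- scal_distr_r.
      replace (/ norm w + (/ norm v - / norm w)) with (/ norm v) by ring.
      apply add_comm. }
  eapply Rle_trans; [apply norm_triangle|]. rewrite !norm_scal. fold (dist v w).
  assert (Hdiff : Rabs (norm w - norm v) <= dist v w).
  { pose proof (norm_le_dist v w). pose proof (norm_le_dist w v).
    rewrite (dist_sym w v) in *. apply Rabs_le; lra. }
  assert (Hcoef : Rabs (/ norm v - / norm w) * norm v = Rabs (norm w - norm v) / norm w).
  { replace (/ norm v - / norm w) with ((norm w - norm v) * / (norm w * norm v))
      by (field; lra).
    rewrite Rabs_mult, (Rabs_right (/ _))
      by (apply Rle_ge, Rlt_le, Rinv_0_lt_compat, Rmult_lt_0_compat; lra).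
    field; lra. }
  rewrite Hcoef, (Rabs_right (/ norm w)) by (apply Rle_ge, Rlt_le, Rinv_0_lt_compat; lra).
  unfold Rdiv. pose proof (Rinv_0_lt_compat _ Hw). nra.
Qed.

Section Construction.
Context {X : BanachSpace} (e : nat -> X).
Hypothesis e_le1 : forall n, norm (e n) <= 1.

Definition tail (k m : nat) : X := tail_sum e (weight k) m.
Definition vec (k : nat) : X := tail k 0.

Lemma weight_le_half k : 0 <= weight k <= 1/2.
Proof. pose proof (weight_range k); lra. Qed.

Lemma tail_rec k m : tail k m = add (e m) (scal (weight k) (tail k (S m))).
Proof. apply tail_sum_rec; auto using weight_le_half. Qed.

Lemma tail_bound k m : norm (tail k m) <= 2.
Proof. apply tail_sum_bound; auto using weight_le_half. Qed.

Lemma tail_near_head k m : dist (tail k m) (e m) <= 2 * weight k.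
Proof.
  rewrite tail_rec, dist_add_self, norm_scal, Rabs_right by (apply Rle_ge, weight_le_half).
  pose proof (tail_bound k (S m)). pose proof (weight_range k). nra.
Qed.

Lemma tail_shift k m : tail k (S m) = scal (/ weight k) (add (tail k m) (opp (e m))).
Proof.
  pose proof (weight_range k).
  rewrite (tail_rec k m), (add_comm _ (e m)), <- add_assoc, add_opp_r, add_zero_r,
    scal_assoc, Rinv_l, scal_one by lra.
  reflexivity.
Qed.

Section Spanning.
Variable A : nat -> Prop.
Hypothesis A_infinite : infinite_nat_set A.
Let V : X -> Prop := fun y => exists k, A k /\ y = vec k.

Lemma head_in_span m : (forall k, A k -> closed_span V (tail k m)) -> closed_span V (e m).
Proof.
  intro Htails. apply closed_span_closed. intros eps Heps.
  destruct (weight_small (eps/2) ltac:(lra)) as [N HN]. destruct (A_infinite N) as [k [Hk Ak]].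
  exists (tail k m). split; auto.
  rewrite dist_sym. pose proof (tail_near_head k m). specialize (HN k Hk). lra.
Qed.

Lemma tails_in_span m k : A k -> closed_span V (tail k m).
Proof.
  revert k; induction m as [|m IH]; intros k Ak.
  - apply closed_span_of_span, span_gen. exists k; auto.
  - rewrite tail_shift. apply closed_span_scal, closed_span_add; auto.
    rewrite opp_scal. apply closed_span_scal, head_in_span; auto.
Qed.

Lemma heads_in_span m : closed_span V (e m).
Proof. apply head_in_span. intros k Ak. apply tails_in_span; auto. Qed.

End Spanning.

Section Operator.
Variables (T : X -> X) (C : R).
Hypothesis T_add : forall x y, T (add x y) = add (T x) (T y).
Hypothesis T_scal : forall a x, T (scal a x) = scal a (T x).
Hypothesis C_nonneg : 0 <= C.
Hypothesis T_bound : forall x, norm (T x) <= C * norm x.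

Lemma image_vec_factor m k :
  (forall j, (j < m)%nat -> T (e j) = zero) -> T (vec k) = scal (weight k ^ m) (T (tail k m)).
Proof.
  induction m as [|m IH]; intro Hkill.
  - simpl. symmetry; apply scal_one.
  - rewrite IH by (intros; apply Hkill; lia).
    rewrite (tail_rec k m), T_add, T_scal, (Hkill m (le_n _)), add_zero_l, scal_assoc.
    simpl. rewrite Rmult_comm; reflexivity.
Qed.

Lemma image_tail_near k m : dist (T (tail k m)) (T (e m)) <= C * (2 * weight k).
Proof.
  eapply Rle_trans; [apply (linear_lipschitz T T_add T_scal C T_bound)|].
  apply Rmult_le_compat_l; [lra | apply tail_near_head].
Qed.

Lemma directions_converge m :
  T (e m) <> zero -> (forall j, (j < m)%nat -> T (e j) = zero) ->
  forall eps, 0 < eps -> exists N, forall k, (N <= k)%nat -> T (vec k) <> zero ->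
    dist (normalize (T (vec k))) (normalize (T (e m))) < eps.
Proof.
  intros Hm Hkill eps Heps. pose proof (norm_pos _ Hm) as Hw.
  destruct (weight_small (eps * norm (T (e m)) / (4 * (C + 1)))) as [N HN].
  { apply Rdiv_lt_0_compat; nra. }
  exists N. intros k Hk Hvec. rewrite (image_vec_factor m k Hkill) in *.
  pose proof (weight_range k) as Hweight.
  pose proof (pow_lt (weight k) m ltac:(lra)) as Hpow.
  assert (Htail : 0 < norm (T (tail k m))).
  { apply norm_pos. intro Hzero. apply Hvec. rewrite Hzero. apply scal_zero_r. }
  rewrite normalize_scal by lra.
  eapply Rle_lt_trans; [apply normalize_dist; auto|].
  pose proof (image_tail_near k m). specialize (HN k Hk).
  apply Rmult_lt_compat_r with (r := 4 * (C + 1)) in HN; [|lra].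
  replace (eps * norm (T (e m)) / (4 * (C + 1)) * (4 * (C + 1)))
    with (eps * norm (T (e m))) in HN by (field; lra).
  apply Rmult_lt_reg_r with (norm (T (e m))); auto.
  unfold Rdiv. rewrite Rmult_assoc, Rinv_l by lra. nra.
Qed.

Lemma images_vanish : (forall j, T (e j) = zero) -> forall k, T (vec k) = zero.
Proof.
  intros Hkill k. apply norm_zero_iff, Rle_antisym; [|apply norm_nonneg].
  (* |T (vec k)| <= (1/2)^m (2 C) for every m *)
  apply le_eps. intros eps Heps.
  destruct (half_pow_small (eps / (2 * C + 1))) as [m Hm].
  { apply Rdiv_lt_0_compat; lra. }
  rewrite (image_vec_factor m k (fun j _ => Hkill j)), norm_scal.
  pose proof (weight_range k).
  assert (Hpow : 0 <= weight k ^ m <= (1/2)^m).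
  { split; [apply pow_le; lra | apply pow_incr; lra]. }
  rewrite Rabs_right by lra.
  assert (Himage : 0 <= norm (T (tail k m)) <= 2 * C + 1).
  { pose proof (T_bound (tail k m)). pose proof (tail_bound k m).
    pose proof (norm_nonneg (T (tail k m))). nra. }
  apply Rmult_lt_compat_r with (r := 2 * C + 1) in Hm; [|lra].
  replace (eps / (2 * C + 1) * (2 * C + 1)) with eps in Hm by (field; lra).
  assert (weight k ^ m * norm (T (tail k m)) <= (1/2)^m * (2 * C + 1))
    by (apply Rmult_le_compat; lra).
  lra.
Qed.

Lemma directions_relatively_compact :
  relatively_compact (fun y => exists k, T (vec k) <> zero /\ y = normalize (T (vec k))).
Proof.
  destruct (classic (exists m, T (e m) <> zero)) as [[m0 Hm0] | Hnone].
  - destruct (least_element (fun m => T (e m) <> zero) m0 Hm0) as [m [Hm Hleast]].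
    apply relatively_compact_convergent with (L := normalize (T (e m))).
    apply directions_converge; auto.
    intros j Hj. apply NNPP, Hleast; auto.
  - apply relatively_compact_convergent with (L := zero).
    intros eps Heps. exists 0%nat. intros k _ Hvec. exfalso. apply Hvec, images_vanish.
    intro j. apply NNPP. intro Hj. apply Hnone; eauto.
Qed.

End Operator.
End Construction.

Definition shrink {X : NormedSpace} (x : X) : X := scal (/ (1 + norm x)) x.

Lemma shrink_le1 {X : NormedSpace} (x : X) : norm (shrink x) <= 1.
Proof.
  unfold shrink. rewrite norm_scal. pose proof (norm_nonneg x).
  rewrite Rabs_right by (apply Rle_ge, Rlt_le, Rinv_0_lt_compat; lra).
  apply Rmult_le_reg_l with (1 + norm x); [lra|].
  rewrite <- Rmult_assoc, Rinv_r by lra. lra.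
Qed.

Lemma shrink_inverse {X : NormedSpace} (x : X) : scal (1 + norm x) (shrink x) = x.
Proof.
  unfold shrink. rewrite scal_assoc. pose proof (norm_nonneg x).
  rewrite Rinv_r by lra. apply scal_one.
Qed.

Theorem mainTheorem1 (X : BanachSpace) (Hsep : separable X) :
  exists a : nat -> X,
    (forall A : nat -> Prop, infinite_nat_set A ->
       forall x : X, closed_span (fun y : X => exists k, A k /\ y = a k) x) /\
    (forall T : X -> X, bounded_linear T ->
       relatively_compact
         (fun y : X => exists k, T (a k) <> zero /\
                          y = scal (/ norm (T (a k))) (T (a k)))).
Proof.
  destruct Hsep as [d Hdense].
  set (e := fun n => shrink (d n)).
  assert (e_le1 : forall n, norm (e n) <= 1) by (intro; apply shrink_le1).
  exists (vec e). split.
  - (* every d n, being a multiple of e n, lies in the closed span *)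
    intros A HA x. apply closed_span_closed. intros eps Heps.
    destruct (Hdense x eps Heps) as [n Hn]. exists (d n). split; auto.
    rewrite <- (shrink_inverse (d n)).
    apply closed_span_scal, (heads_in_span e e_le1 A HA).
  - intros T HT. destruct (bounded_linear_nonneg_bound T HT) as [C [HC0 HC]].
    destruct HT as [T_add [T_scal _]].
    exact (directions_relatively_compact e e_le1 T C T_add T_scal HC0 HC).
Qed.
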